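(* Let $\mathcal{M}_{\hat A'\hat B'\to\hat A\hat B}$ be a bipartite quantum channel and let $\Theta^{\mathrm{PPT}}$ be a completely-PPT-preserving superchannel, i.e. $\Theta^{\mathrm{PPT}}(\mathcal{M})=\mathcal{P}^{\mathrm{post}}_{A_M\hat A\hat BB_M\to AB}\circ\mathcal{M}_{\hat A'\hat B'\to\hat A\hat B}\circ\mathcal{P}^{\mathrm{pre}}_{A'B'\to\hat A'\hat B'A_MB_M}$ for completely PPT-preserving channels $\mathcal{P}^{\mathrm{pre}},\mathcal{P}^{\mathrm{post}}$. Then $$E_N(\mathcal{M})\ge E_N(\Theta^{\mathrm{PPT}}(\mathcal{M})).$$
   Context: $T_X$ denotes partial transpose on system $X$. The diamond norm of a Hermitian-preserving map $\mathcal{P}_{C\to D}$ is $\sup_\psi\|(\mathrm{id}_R\otimes\mathcal{P})(\psi_{RC})\|_1$ over pure states. For a bipartite map $\mathcal{N}_{A'B'\to AB}$ (Alice: $A',A$; Bob: $B',B$), $E_N(\mathcal{N})=\log\|T_B\circ\mathcal{N}\circ T_{B'}\|_\diamond$. A bipartite channel is completely PPT-preserving if conjugating it by partial transposes on Bob's input and output systems yields a completely positive map. In the superchannel, Alice holds $A',\hat A',A_M,\hat A,A$ and Bob holds $B',\hat B',B_M,\hat B,B$. *)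

From HB Require Import structures.
From mathcomp Require Import all_boot all_order all_algebra.
Set Implicit Arguments. Unset Strict Implicit. Unset Printing Implicit Defensive.
Import Order.TTheory GRing.Theory Num.Theory.
Local Open Scope ring_scope.

Section QI.
Variable C : numClosedFieldType.

Definition Op (I : finType) := 'M[C]_#|I|.
Arguments Op I%_type_scope.

Definition opE (I : finType) (X : Op I) (i j : I) : C :=
  X (enum_rank i) (enum_rank j).

Definition mkop (I : finType) (f : I -> I -> C) : Op I :=
  \matrix_(k, l) f (enum_val k) (enum_val l).

Definition adj m n (X : 'M[C]_(m, n)) : 'M[C]_(n, m) := (map_mx Num.conj X)^T.

Definition psd n (X : 'M[C]_n) : Prop :=
  forall v : 'cV[C]_n, 0 <= (adj v *m X *m v) 0 0.

(* id_R (x) f, acting on operators on R (x) I (reference system first) *)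
Definition idtensor (R I J : finType) (f : Op I -> Op J) (X : Op (R * I)) :
    Op (R * J) :=
  mkop (fun p q : R * J =>
    opE (f (mkop (fun i i' : I => opE X (p.1, i) (q.1, i')))) p.2 q.2).

Definition CP (I J : finType) (f : Op I -> Op J) : Prop :=
  forall (R : finType) (X : Op (R * I)), psd X -> psd (idtensor f X).

Definition TP (I J : finType) (f : Op I -> Op J) : Prop :=
  forall X : Op I, \tr (f X) = \tr X.

Definition channel (I J : finType) (f : Op I -> Op J) : Prop :=
  linear f /\ CP f /\ TP f.

Definition ptB (IA IB : finType) (X : Op (IA * IB)) : Op (IA * IB) :=
  mkop (fun p q : IA * IB => opE X (p.1, q.2) (q.1, p.2)).

(* completely PPT-preserving bipartite channel (Alice = first factor,
   Bob = second factor of input and output) *)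
Definition PPTchannel (IA IB JA JB : finType)
    (f : Op (IA * IB) -> Op (JA * JB)) : Prop :=
  channel f /\ CP (fun X => ptB (f (ptB X))).

Definition eigvals n (A : 'M[C]_n) : seq C :=
  sval (closed_field_poly_normal (char_poly A)).

(* trace norm = sum of singular values = Tr sqrt(X^* X) *)
Definition tnorm n (X : 'M[C]_n) : C :=
  \sum_(z <- eigvals (adj X *m X)) sqrtC z.

(* b is an upper bound for { || (id_R (x) P)(psi_RC) ||_1 : psi pure },
   i.e. ||P||_diamond <= b *)
Definition diamond_le (I J : finType) (P : Op I -> Op J) (b : C) : Prop :=
  forall (R : finType) (v : 'cV[C]_#|{: (R * I)%type}|),
    adj v *m v = 1%:M -> tnorm (idtensor P (v *m adj v)) <= b.

(* E_N(N) <= E_N(N') , i.e. log ||T_B o N o T_B'||_diamond <=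
   log ||T_B o N' o T_B'||_diamond, stated as inequality of the suprema
   (every upper bound of the second set bounds the first set). *)
Definition EN_le (IA IB JA JB IA' IB' JA' JB' : finType)
    (N : Op (IA * IB) -> Op (JA * JB))
    (N' : Op (IA' * IB') -> Op (JA' * JB')) : Prop :=
  forall b : C, diamond_le (fun X => ptB (N' (ptB X))) b ->
                diamond_le (fun X => ptB (N (ptB X))) b.

(* (M (x) id_{A_M B_M}) acting on the output of the pre-processing,
   with systems ordered (Ah' A_M)(Bh' B_M) -> (A_M Ah)(Bh B_M). *)
Definition applyM (hA' hB' hA hB AM BM : finType)
    (M : Op (hA' * hB') -> Op (hA * hB))
    (X : Op ((hA' * AM) * (hB' * BM))) : Op ((AM * hA) * (hB * BM)) :=
  mkop (fun p q : (AM * hA) * (hB * BM) =>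
    let am := p.1.1 in let a := p.1.2 in let b := p.2.1 in let bm := p.2.2 in
    let am' := q.1.1 in let a' := q.1.2 in let b' := q.2.1 in let bm' := q.2.2 in
    opE (M (mkop (fun x y : hA' * hB' =>
                    opE X ((x.1, am), (x.2, bm)) ((y.1, am'), (y.2, bm')))))
        (a, b) (a', b')).

Definition superchannel (A' B' hA' hB' AM BM hA hB A B : finType)
    (Ppre : Op (A' * B') -> Op ((hA' * AM) * (hB' * BM)))
    (Ppost : Op ((AM * hA) * (hB * BM)) -> Op (A * B))
    (M : Op (hA' * hB') -> Op (hA * hB)) : Op (A' * B') -> Op (A * B) :=
  fun X => Ppost (applyM M (Ppre X)).

End QI.
Arguments Op C I%_type_scope.

From HB Require Import structures.
From mathcomp Require Import all_boot all_order all_algebra.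
From mathcomp Require Import sesquilinear spectral.
From mathcomp Require Import ring.
Set Implicit Arguments. Unset Strict Implicit. Unset Printing Implicit Defensive.
Import Order.TTheory GRing.Theory Num.Theory.
Local Open Scope ring_scope.
Local Open Scope sesquilinear_scope.

(* Write N^Gamma := T_B o N o T_B' for the partial transpose of a bipartite
   map, and fix a pure input |v><v| on R (x) A'B'.  Then
   (id (x) Theta(M)^Gamma)(|v><v|) is (id (x) Ppost^Gamma) applied to
   (id (x) (M^Gamma (x) id))(rho), where rho := (id (x) Ppre^Gamma)(|v><v|)
   is a state because Ppre^Gamma is CP and trace preserving.  Factoring
   rho = G G^H yields a purification |w> of rho on an enlarged reference,
   and (id (x) (M^Gamma (x) id))(rho) is a partial trace of the self-adjoint
   operator W := (id (x) M^Gamma)(|w><w|).  The map "partial trace, then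
   id (x) Ppost^Gamma" is positive and trace preserving, and such maps do not
   increase the trace norm of self-adjoint operators (Jordan decomposition
   W = W+ - W-).  So ||(id (x) Theta(M)^Gamma)(|v><v|)||_1 <= ||W||_1, and
   every bound on the diamond norm of M^Gamma bounds that of Theta(M)^Gamma. *)

Section QuantumOps.
Variable C : numClosedFieldType.

Lemma opE_mkop (I : finType) (f : I -> I -> C) i j : opE (mkop f) i j = f i j.
Proof. by rewrite /opE /mkop mxE !enum_rankK. Qed.

Lemma op_ext (I : finType) (X Y : Op C I) :
  (forall i j, opE X i j = opE Y i j) -> X = Y.
Proof.
move=> eqXY; apply/matrixP => k l.
by rewrite -[k]enum_valK -[l]enum_valK; apply: eqXY.
Qed.

Lemma opE_add (I : finType) (X Y : Op C I) i j :
  opE (X + Y) i j = opE X i j + opE Y i j.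
Proof. by rewrite /opE mxE. Qed.

Lemma opE_sub (I : finType) (X Y : Op C I) i j :
  opE (X - Y) i j = opE X i j - opE Y i j.
Proof. by rewrite /opE !mxE. Qed.

Lemma opE_scale (I : finType) (a : C) (X : Op C I) i j :
  opE (a *: X) i j = a * opE X i j.
Proof. by rewrite /opE mxE. Qed.

Lemma opE_sum (I J : finType) (F : J -> Op C I) i j :
  opE (\sum_k F k) i j = \sum_k opE (F k) i j.
Proof. by rewrite /opE summxE. Qed.

Lemma opE_adj (I : finType) (X : Op C I) i j : opE (adj X) i j = (opE X j i)^*.
Proof. by rewrite /opE !mxE. Qed.

Lemma sum_enum_val (I : finType) (F : I -> C) :
  \sum_(k < #|I|) F (enum_val k) = \sum_i F i.
Proof.
rewrite (reindex (@enum_rank I)) /=;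
  last exact/onW_bij/(Bijective (@enum_rankK I) (@enum_valK I)).
by apply: eq_bigr => i _; rewrite enum_rankK.
Qed.

Lemma sum_pair (I J : finType) (F : I * J -> C) :
  \sum_p F p = \sum_i \sum_j F (i, j).
Proof. by rewrite pair_bigA; apply: eq_bigr => -[]. Qed.

Lemma sum_bij (I J : finType) (g : I -> J) :
  bijective g -> forall F : J -> C, \sum_j F j = \sum_i F (g i).
Proof. by move=> bij_g F; rewrite (reindex g) //; apply: onW_bij. Qed.

Lemma trE (I : finType) (X : Op C I) : \tr X = \sum_i opE X i i.
Proof. by rewrite -sum_enum_val; apply: eq_bigr => k _; rewrite /opE enum_valK. Qed.

Lemma adjB m n (X Y : 'M[C]_(m, n)) : adj (X - Y) = adj X - adj Y.
Proof. by apply/matrixP => i j; rewrite !mxE rmorphB. Qed.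

Lemma adjD m n (X Y : 'M[C]_(m, n)) : adj (X + Y) = adj X + adj Y.
Proof. by apply/matrixP => i j; rewrite !mxE rmorphD. Qed.

Lemma adjZ m n (c : C) (X : 'M[C]_(m, n)) : adj (c *: X) = c^* *: adj X.
Proof. by apply/matrixP => i j; rewrite !mxE rmorphM. Qed.

Lemma adj_mul m n p (X : 'M[C]_(m, n)) (Y : 'M[C]_(n, p)) :
  adj (X *m Y) = adj Y *m adj X.
Proof. by rewrite /adj map_mxM trmx_mul. Qed.

Lemma adjK m n (X : 'M[C]_(m, n)) : adj (adj X) = X.
Proof. by apply/matrixP => i j; rewrite !mxE conjCK. Qed.

Lemma adj_hermsym n (X : 'M[C]_n) : adj X = X -> X \is hermsymmx.
Proof.
move=> X_sa; rewrite qualifE expr0 scale1r; apply/eqP; rewrite -{1}X_sa.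
by apply/matrixP => i j; rewrite !mxE.
Qed.

Definition sform n (X : 'M[C]_n) (u w : 'cV[C]_n) : C := (adj u *m X *m w) 0 0.

Lemma sform_delta n (X : 'M[C]_n) i j :
  sform X (delta_mx i 0) (delta_mx j 0) = X i j.
Proof.
rewrite /sform mxE (bigD1 j) //= big1 ?addr0; last first.
  by move=> k /negPf kj; rewrite !mxE kj mulr0.
rewrite !mxE eqxx mulr1 (bigD1 i) //= big1 ?addr0; last first.
  by move=> k /negPf ki; rewrite !mxE ki rmorph0 mul0r.
by rewrite !mxE eqxx /= rmorph1 mul1r.
Qed.

Lemma sform_expand n (X : 'M[C]_n) (u w : 'cV[C]_n) (c : C) :
  sform X (u + c *: w) (u + c *: w) = sform X u u + c * sform X u w
    + c^* * sform X w u + c^* * c * sform X w w.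
Proof.
rewrite /sform adjD adjZ !(mulmxDl, mulmxDr) -!scalemxAl -!scalemxAr !mxE.
by ring.
Qed.

Lemma polarization_conj (a b : C) :
  (forall c, (c * a + c^* * b)^* = c * a + c^* * b) -> b = a^*.
Proof.
move=> real_mix; have := real_mix 1; have := real_mix 'i.
rewrite !rmorphD !rmorphM /= !conjCK conjCi conjC1 !mul1r => ri r1.
have {}ri : b^* - a^* = a - b.
  apply: (mulfI (@neq0Ci C)).
  by rewrite !mulrBr [_ - _ * a^*]addrC -!mulNr ri.
have : (b - a^*) *+ 2 = 0.
  rewrite mulr2n.
  have -> : b - a^* + (b - a^*) = (a + b - (a^* + b^*)) + ((b^* - a^*) - (a - b)).
    by ring.
  by rewrite r1 ri !subrr addr0.
by move/eqP; rewrite mulrn_eq0 /= subr_eq0 => /eqP.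
Qed.

Lemma psd_adj n (X : 'M[C]_n) : psd X -> adj X = X.
Proof.
move=> pX; apply/matrixP => i j; rewrite !mxE.
have real_diag v : (sform X v v)^* = sform X v v by exact/conj_Creal/ger0_real/pX.
rewrite -!sform_delta; symmetry; apply: polarization_conj => c.
set ej := delta_mx j 0; set ei := delta_mx i 0.
have -> : c * sform X ej ei + c^* * sform X ei ej =
    sform X (ej + c *: ei) (ej + c *: ei) - sform X ej ej - c^* * c * sform X ei ei.
  by rewrite sform_expand; ring.
by rewrite !rmorphB !rmorphM /= !real_diag conjCK [c * c^*]mulrC.
Qed.

Definition qform (I : finType) (X : Op C I) (u : I -> C) : C :=
  \sum_i \sum_j (u i)^* * opE X i j * u j.

Lemma qformE (I : finType) (X : Op C I) (v : 'cV[C]_#|I|) :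
  (adj v *m X *m v) 0 0 = qform X (fun i => v (enum_rank i) 0).
Proof.
rewrite /qform mxE; under eq_bigr do rewrite mxE mulr_suml.
rewrite exchange_big -[RHS]sum_enum_val; apply: eq_bigr => l _.
rewrite -[RHS]sum_enum_val; apply: eq_bigr => k _.
by rewrite /opE !mxE !enum_valK.
Qed.

Lemma psdP (I : finType) (X : Op C I) : psd X <-> forall u, 0 <= qform X u.
Proof.
split=> [pX u|pX v]; last by rewrite qformE.
have := pX (\col_k u (enum_val k)); rewrite qformE; congr (0 <= _).
by apply: eq_bigr => i _; apply: eq_bigr => j _; rewrite !mxE !enum_rankK.
Qed.

Lemma psd_vv n (v : 'cV[C]_n) : psd (v *m adj v).
Proof.
move=> w; have -> : adj w *m (v *m adj v) *m w = (adj w *m v) *m (adj v *m w).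
  by rewrite !mulmxA.
rewrite -[adj v *m w]adjK adj_mul adjK.
by rewrite mxE big_ord1 /adj !mxE mul_conjC_ge0.
Qed.

Lemma psd_conj_diag n (P : 'M[C]_n) (e : 'rV[C]_n) : P \is unitarymx ->
  (forall i, 0 <= e 0 i) -> psd (invmx P *m diag_mx e *m P).
Proof.
move=> PU e_ge0 v; rewrite invmx_unitary //.
have -> : P^t* = adj P by apply/matrixP => i j; rewrite !mxE.
rewrite !mulmxA -adj_mul -!mulmxA mulmxA; set w := P *m v.
rewrite mxE; apply: sumr_ge0 => i _; rewrite mul_mx_diag !mxE.
by rewrite mulrAC mulr_ge0 // mulrC mul_conjC_ge0.
Qed.

Lemma psd_diag_ge0 n (X P : 'M[C]_n) i : P \is unitarymx -> psd X ->
  0 <= (P *m X *m invmx P) i i.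
Proof.
move=> PU pX; rewrite invmx_unitary //.
set w : 'cV[C]_n := \col_k (P i k)^*.
have -> : (P *m X *m P^t*) i i = (adj w *m X *m w) 0 0.
  rewrite !mxE; apply: eq_bigr => k _; rewrite !mxE; congr (_ * _).
  by apply: eq_bigr => l _; rewrite !mxE conjCK.
exact: pX.
Qed.

Lemma tr_conj_diag n (P : 'M[C]_n) (e : 'rV[C]_n) : P \in unitmx ->
  \tr (invmx P *m diag_mx e *m P) = \sum_i e 0 i.
Proof. by move=> Pu; rewrite mxtrace_mulC mulmxA mulmxV // mul1mx mxtrace_diag. Qed.

Lemma psd_factor n (X : 'M[C]_n) : psd X -> exists G : 'M[C]_n, X = G *m adj G.
Proof.
move=> pX; have /hermitian_normalmx/orthomx_spectralP EX :=
  adj_hermsym (psd_adj pX).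
set P := spectralmx X in EX; set d := spectral_diag X in EX *.
have Pu : P \in unitmx by apply: spectral_unit.
have PU : P \is unitarymx by apply: spectral_unitarymx.
have d_ge0 i : 0 <= d 0 i.
  have := psd_diag_ge0 i PU pX; congr (0 <= _).
  by rewrite {1}EX !mulmxA mulmxV // mul1mx mulmxK // mxE eqxx mulr1n.
pose s := \row_i sqrtC (d 0 i).
exists (invmx P *m diag_mx s); rewrite adj_mul -mulmxA (mulmxA (diag_mx s)).
have -> : adj (diag_mx s) = diag_mx s.
  apply/matrixP => i j; rewrite /adj !mxE.
  case: (eqVneq i j) => [->|_]; last by rewrite !mulr0n rmorph0.
  by rewrite !mulr1n conj_Creal // sqrtC_real.
have -> : adj (invmx P) = P.
  by rewrite invmx_unitary //; apply/matrixP => i j; rewrite /adj !mxE conjCK.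
rewrite mulmx_diag !mulmxA {1}EX; congr (_ *m diag_mx _ *m _).
by apply/rowP => i; rewrite !mxE -expr2 sqrtCK.
Qed.

Lemma char_poly_conj n (P D : 'M[C]_n) : P \in unitmx ->
  char_poly (invmx P *m D *m P) = char_poly D.
Proof.
move=> Pu; rewrite /char_poly /char_poly_mx.
have -> : 'X%:M - map_mx polyC (invmx P *m D *m P) =
   map_mx polyC (invmx P) *m ('X%:M - map_mx polyC D) *m map_mx polyC P.
  rewrite !map_mxM mulmxBr mulmxBl mul_mx_scalar -scalemxAl.
  by rewrite -[X in _ *: X]map_mxM mulVmx // map_mx1 scalemx1.
rewrite !det_mulmx !det_map_mx mulrC mulrA -rmorphM -det_mulmx mulmxV //.
by rewrite det1 rmorph1 mul1r.
Qed.

Lemma eigvals_conj n (P : 'M[C]_n) (e : 'rV[C]_n) : P \in unitmx ->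
  perm_eq (eigvals (invmx P *m diag_mx e *m P)) [seq e 0 i | i <- enum 'I_n].
Proof.
move=> Pu; rewrite /eigvals; case: closed_field_poly_normal => r /= Hr.
rewrite char_poly_conj // char_poly_trig ?diag_mx_is_trig // in Hr.
have := monic_prod_XsubC (index_enum 'I_n) xpredT (fun i => diag_mx e i i).
move/monicP => lead1; rewrite lead1 scale1r in Hr.
apply: prod_XsubC_eq; rewrite -Hr big_map big_enum /=.
by apply: eq_bigr => i _; rewrite mxE eqxx mulr1n.
Qed.

Lemma tnorm_herm n (Z : 'M[C]_n) : Z \is hermsymmx ->
  tnorm Z = \sum_i `|spectral_diag Z 0 i|.
Proof.
move=> Zh; have /orthomx_spectralP EZ := hermitian_normalmx Zh.
have dR := hermitian_spectral_diag_real Zh.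
set P := spectralmx Z in EZ; set d := spectral_diag Z in EZ dR *.
have Pu : P \in unitmx by apply: spectral_unit.
have Z_sa : adj Z = Z.
  move: Zh; rewrite qualifE expr0 scale1r => /eqP {2}->.
  by apply/matrixP => i j; rewrite !mxE.
have ZZ : adj Z *m Z = invmx P *m diag_mx (\row_j (d 0 j * d 0 j)) *m P.
  rewrite Z_sa {1 2}EZ -!mulmxA; congr (_ *m _).
  by rewrite !mulmxA mulmxK // mulmx_diag.
rewrite /tnorm ZZ (perm_big _ (eigvals_conj _ Pu)) big_map big_enum /=.
apply: eq_bigr => i _; rewrite mxE -expr2 -real_normK ?sqrCK //.
exact: (mxOverP dR).
Qed.

Lemma herm_split n (X : 'M[C]_n) : adj X = X ->
  exists Xp Xm, [/\ psd Xp, psd Xm, X = Xp - Xm & tnorm X = \tr Xp + \tr Xm].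
Proof.
move=> /adj_hermsym Xh; have /orthomx_spectralP EX := hermitian_normalmx Xh.
have dR := hermitian_spectral_diag_real Xh.
rewrite tnorm_herm //.
set P := spectralmx X in EX; set d := spectral_diag X in EX dR *.
have Pu : P \in unitmx by apply: spectral_unit.
have PU : P \is unitarymx by apply: spectral_unitarymx.
have dRi i : d 0 i \is Num.real by apply: (mxOverP dR).
pose dp := \row_i ((`|d 0 i| + d 0 i) / 2).
pose dm := \row_i ((`|d 0 i| - d 0 i) / 2).
exists (invmx P *m diag_mx dp *m P), (invmx P *m diag_mx dm *m P); split.
- apply: psd_conj_diag => // i; rewrite mxE divr_ge0 ?ler0n //.
  by rewrite -lerBlDr sub0r -normrN real_ler_norm ?rpredN.
- apply: psd_conj_diag => // i; rewrite mxE divr_ge0 ?ler0n //.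
  by rewrite subr_ge0 real_ler_norm.
- rewrite -mulmxBl -mulmxBr {1}EX; congr (_ *m _ *m _).
  apply/matrixP => i j; rewrite !mxE -mulrnBl; congr (_ *+ _).
  by field.
- rewrite !tr_conj_diag // -big_split; apply: eq_bigr => i _; rewrite !mxE.
  by change (`|d 0 i| = (`|d 0 i| + d 0 i) / 2 + (`|d 0 i| - d 0 i) / 2); field.
Qed.

Lemma tnorm_psd_diff n (A B : 'M[C]_n) : psd A -> psd B ->
  tnorm (A - B) <= \tr A + \tr B.
Proof.
move=> pA pB; have Zh : (A - B) \is hermsymmx.
  by apply: adj_hermsym; rewrite adjB !psd_adj.
rewrite tnorm_herm //; have /orthomx_spectralP EZ := hermitian_normalmx Zh.
set P := spectralmx (A - B) in EZ; set d := spectral_diag (A - B) in EZ *.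
have Pu : P \in unitmx by apply: spectral_unit.
have PU : P \is unitarymx by apply: spectral_unitarymx.
pose conjP X := P *m X *m invmx P.
have dE i : d 0 i = conjP A i i - conjP B i i.
  have : conjP (A - B) = diag_mx d.
    by rewrite /conjP {1}EZ !mulmxA mulmxV // mul1mx mulmxK.
  by move/matrixP/(_ i i); rewrite /conjP mulmxBr mulmxBl !mxE eqxx mulr1n => <-.
have trP X : \sum_i conjP X i i = \tr X.
  by rewrite -/(\tr _) mxtrace_mulC mulmxA mulVmx // mul1mx.
under eq_bigr do rewrite dE.
apply: le_trans (ler_sum _ (fun i _ => ler_normB _ _)) _.
rewrite big_split /= -(trP A) -(trP B); apply: lerD; apply: ler_sum => i _;
  by rewrite ger0_norm // psd_diag_ge0.
Qed.

Lemma tnorm_contract m n (f : 'M[C]_m -> 'M[C]_n) (W : 'M[C]_m) :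
  (forall X Y, f (X - Y) = f X - f Y) -> (forall X, psd X -> psd (f X)) ->
  (forall X, \tr (f X) = \tr X) -> adj W = W -> tnorm (f W) <= tnorm W.
Proof.
move=> fB f_pos f_tr /herm_split [Wp [Wm [pWp pWm -> ->]]].
by rewrite fB -!(f_tr Wp) -(f_tr Wm); apply: tnorm_psd_diff; apply: f_pos.
Qed.

Section Linear.
Variables (I J : finType) (f : Op C I -> Op C J).
Hypothesis lin_f : linear f.

Lemma linB X Y : f (X - Y) = f X - f Y.
Proof. exact: zmod_morphism_linear lin_f X Y. Qed.

Lemma lin0 : f 0 = 0.
Proof. by rewrite -(subrr 0) linB subrr. Qed.

Lemma linD X Y : f (X + Y) = f X + f Y.
Proof.
have linN Z : f (- Z) = - f Z by rewrite -sub0r linB lin0 sub0r.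
by rewrite -{1}[Y]opprK linB linN opprK.
Qed.

Lemma lin_sum (K : finType) (F : K -> Op C I) : f (\sum_k F k) = \sum_k f (F k).
Proof. exact: (big_morph f linD lin0). Qed.
End Linear.

Definition blk (R I : finType) (X : Op C (R * I)) (r r' : R) : Op C I :=
  mkop (fun i i' => opE X (r, i) (r', i')).

Lemma opE_blk (R I : finType) (X : Op C (R * I)) r r' i i' :
  opE (blk X r r') i i' = opE X (r, i) (r', i').
Proof. exact: opE_mkop. Qed.

Lemma opE_idt (R I J : finType) (f : Op C I -> Op C J) (X : Op C (R * I)) p q :
  opE (idtensor f X) p q = opE (f (blk X p.1 q.1)) p.2 q.2.
Proof. by rewrite /idtensor opE_mkop. Qed.

Lemma idtensor_ext (R I J : finType) (f g : Op C I -> Op C J) (X : Op C (R * I)) :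
  f =1 g -> idtensor f X = idtensor g X.
Proof. by move=> eq_fg; apply: op_ext => p q; rewrite !opE_idt eq_fg. Qed.

Lemma idtensor_comp (R I J K : finType) (f : Op C J -> Op C K)
    (g : Op C I -> Op C J) (X : Op C (R * I)) :
  idtensor (f \o g) X = idtensor f (idtensor g X).
Proof.
apply: op_ext => p q; rewrite !opE_idt; congr (opE (f _) _ _).
by apply: op_ext => i j; rewrite opE_blk opE_idt.
Qed.

Lemma tr_idt (R I J : finType) (f : Op C I -> Op C J) (X : Op C (R * I)) :
  TP f -> \tr (idtensor f X) = \tr X.
Proof.
move=> tp_f; rewrite !trE !sum_pair; apply: eq_bigr => r _.
have -> : \sum_i opE X (r, i) (r, i) = \tr (blk X r r).
  by rewrite trE; apply: eq_bigr => i _; rewrite opE_blk.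
by rewrite -tp_f trE; apply: eq_bigr => j _; rewrite opE_idt.
Qed.

Lemma idtB (R I J : finType) (f : Op C I -> Op C J) (X Y : Op C (R * I)) :
  linear f -> idtensor f (X - Y) = idtensor f X - idtensor f Y.
Proof.
move=> lin_f; apply: op_ext => p q; rewrite opE_sub !opE_idt -opE_sub -linB //.
by congr (opE (f _) _ _); apply: op_ext => i j; rewrite !(opE_blk, opE_sub).
Qed.

(* A linear CP map preserves self-adjointness, since every self-adjoint
   operator is a difference of psd ones. *)
Lemma idt_herm (R I J : finType) (f : Op C I -> Op C J) (X : Op C (R * I)) :
  linear f -> CP f -> adj X = X -> adj (idtensor f X) = idtensor f X.
Proof.
move=> lin_f cp_f /herm_split [Xp [Xm [pp pm -> _]]].
by rewrite idtB // adjB !psd_adj //; apply: cp_f.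
Qed.

Lemma opE_ptB (IA IB : finType) (X : Op C (IA * IB)) p q :
  opE (ptB X) p q = opE X (p.1, q.2) (q.1, p.2).
Proof. exact: opE_mkop. Qed.

Lemma ptB_tr (IA IB : finType) (X : Op C (IA * IB)) : \tr (ptB X) = \tr X.
Proof. by rewrite !trE; apply: eq_bigr => -[a b]; rewrite opE_ptB. Qed.

Lemma ptB_lin (IA IB : finType) : linear (@ptB C IA IB).
Proof.
by move=> a X Y; apply: op_ext => p q; rewrite !(opE_ptB, opE_add, opE_scale).
Qed.

Definition ptconj (IA IB JA JB : finType) (N : Op C (IA * IB) -> Op C (JA * JB))
  (X : Op C (IA * IB)) : Op C (JA * JB) := ptB (N (ptB X)).

Lemma ptconj_lin (IA IB JA JB : finType) (N : Op C (IA * IB) -> Op C (JA * JB)) :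
  linear N -> linear (ptconj N).
Proof. by move=> lin_N a X Y; rewrite /ptconj ptB_lin lin_N ptB_lin. Qed.

Lemma ptconj_TP (IA IB JA JB : finType) (N : Op C (IA * IB) -> Op C (JA * JB)) :
  TP N -> TP (ptconj N).
Proof. by move=> tp_N X; rewrite /ptconj ptB_tr tp_N ptB_tr. Qed.

(* Partial transposition leaves the memory systems alone, so
   (M^Gamma (x) id)^Gamma = M (x) id; consequently
   Theta(M)^Gamma = Ppost^Gamma o (M^Gamma (x) id) o Ppre^Gamma. *)
Lemma applyM_ptconj (hA' hB' hA hB AM BM : finType)
    (M : Op C (hA' * hB') -> Op C (hA * hB)) (Y : Op C ((hA' * AM) * (hB' * BM))) :
  ptconj (applyM (ptconj M)) Y = applyM M Y.
Proof.
apply: op_ext => -[[am a] [b bm]] [[am' a'] [b' bm']].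
rewrite /ptconj opE_ptB /applyM !opE_mkop /=.
congr (opE (M _) _ _); apply: op_ext => x y.
by rewrite !(opE_ptB, opE_mkop).
Qed.

Lemma superchannel_ptconj (A' B' hA' hB' AM BM hA hB A B : finType)
    (Ppre : Op C (A' * B') -> Op C ((hA' * AM) * (hB' * BM)))
    (Ppost : Op C ((AM * hA) * (hB * BM)) -> Op C (A * B))
    (M : Op C (hA' * hB') -> Op C (hA * hB)) X :
  ptconj (superchannel Ppre Ppost M) X =
  ptconj Ppost (applyM (ptconj M) (ptconj Ppre X)).
Proof. by rewrite {1}/ptconj /superchannel -(applyM_ptconj M). Qed.

Definition ptR (R IA IB : finType) (X : Op C (R * (IA * IB))) :
    Op C (R * (IA * IB)) :=
  mkop (fun p q => opE X (p.1, (p.2.1, q.2.2)) (q.1, (q.2.1, p.2.2))).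

Lemma idt_ptconj (R IA IB JA JB : finType) (N : Op C (IA * IB) -> Op C (JA * JB))
    (X : Op C (R * (IA * IB))) :
  idtensor (ptconj N) X = ptR (idtensor N (ptR X)).
Proof.
apply: op_ext => p q; rewrite !opE_idt opE_ptB /ptR opE_mkop opE_idt /=.
congr (opE (N _) _ _); apply: op_ext => i j.
by rewrite opE_ptB !opE_blk !opE_mkop.
Qed.

Lemma ptR_herm (R IA IB : finType) (X : Op C (R * (IA * IB))) :
  adj X = X -> adj (ptR X) = ptR X.
Proof.
by move=> X_sa; apply: op_ext => p q; rewrite opE_adj /ptR !opE_mkop -{2}X_sa opE_adj.
Qed.

Lemma ptconj_pure_herm (R IA IB JA JB : finType)
    (N : Op C (IA * IB) -> Op C (JA * JB)) (w : 'cV[C]_#|{: R * (IA * IB)}|) :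
  linear N -> CP N ->
  adj (idtensor (ptconj N) (w *m adj w)) = idtensor (ptconj N) (w *m adj w).
Proof.
move=> lin_N cp_N; rewrite idt_ptconj; apply/ptR_herm/idt_herm => //.
exact/ptR_herm/psd_adj/psd_vv.
Qed.

Definition ptrace (K P : finType) (Y : Op C (K * P)) : Op C P :=
  mkop (fun p q => \sum_k opE Y (k, p) (k, q)).

Lemma ptraceB (K P : finType) (X Y : Op C (K * P)) :
  ptrace (X - Y) = ptrace X - ptrace Y.
Proof.
apply: op_ext => p q; rewrite opE_sub !opE_mkop -sumrB.
by apply: eq_bigr => k _; rewrite opE_sub.
Qed.

Lemma ptrace_tr (K P : finType) (Y : Op C (K * P)) : \tr (ptrace Y) = \tr Y.
Proof.
rewrite !trE sum_pair exchange_big; apply: eq_bigr => p _; exact: opE_mkop.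
Qed.

(* Sums and diagonal blocks (compressions) of psd operators are psd; the
   partial trace is the sum of the diagonal blocks, hence positive. *)
Lemma psd_sum (K : finType) n (F : K -> 'M[C]_n) :
  (forall k, psd (F k)) -> psd (\sum_k F k).
Proof.
move=> pF v; rewrite mulmx_sumr mulmx_suml summxE.
by apply: sumr_ge0 => k _; apply: pF.
Qed.

Lemma qform_blk (K P : finType) (Y : Op C (K * P)) k (u : P -> C) :
  qform (blk Y k k) u = qform Y (fun z => (z.1 == k)%:R * u z.2).
Proof.
rewrite /qform [RHS]sum_pair [RHS](bigD1 k) //= [X in _ = _ + X]big1 ?addr0;
  last by move=> k' /negPf k'k; apply: big1 => p _; apply: big1 => z _;
    rewrite k'k mul0r rmorph0 !mul0r.
apply: eq_bigr => p _; rewrite [RHS]sum_pair [RHS](bigD1 k) //=.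
rewrite [X in _ = _ + X]big1 ?addr0;
  last by move=> k' /negPf k'k; apply: big1 => q _; rewrite k'k mul0r mulr0.
by apply: eq_bigr => q _; rewrite opE_blk eqxx rmorph1 !mul1r.
Qed.

Lemma ptrace_psd (K P : finType) (Y : Op C (K * P)) : psd Y -> psd (ptrace Y).
Proof.
move=> /psdP pY; have -> : ptrace Y = \sum_k blk Y k k.
  apply: op_ext => p q; rewrite opE_mkop opE_sum.
  by apply: eq_bigr => k _; rewrite opE_blk.
by apply: psd_sum => k; apply/psdP => u; rewrite qform_blk; apply: pY.
Qed.

Definition relabel (I J : finType) (g : I -> J) (Y : Op C J) : Op C I :=
  mkop (fun i i' => opE Y (g i) (g i')).

Section Relabel.
Variables (I J : finType) (g : I -> J).
Hypothesis bij_g : bijective g.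

Lemma relabelB (X Y : Op C J) : relabel g (X - Y) = relabel g X - relabel g Y.
Proof. by apply: op_ext => i j; rewrite !(opE_sub, opE_mkop). Qed.

Lemma relabel_tr (Y : Op C J) : \tr (relabel g Y) = \tr Y.
Proof. by rewrite !trE (sum_bij bij_g); apply: eq_bigr => i _; rewrite opE_mkop. Qed.

Lemma relabel_psd (Y : Op C J) : psd Y -> psd (relabel g Y).
Proof.
case: bij_g => g' gK g'K /psdP pY; apply/psdP => u.
have := pY (u \o g'); rewrite /qform (sum_bij bij_g).
congr (0 <= _); apply: eq_bigr => i _; rewrite (sum_bij bij_g).
by apply: eq_bigr => j _; rewrite opE_mkop /= !gK.
Qed.
End Relabel.

(* The relabelling
     K * (R * ((AM * X) * (Y * BM))) ~ ((K * R) * (AM * BM)) * (X * Y)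
   grouping the purifying system K and the memory AM BM with the reference,
   apart from the channel's systems X Y. *)
Definition reorder (K R AM BM X Y : finType)
    (w : K * (R * ((AM * X) * (Y * BM)))) : ((K * R) * (AM * BM)) * (X * Y) :=
  let: (k, (r, ((am, x), (y, bm)))) := w in (((k, r), (am, bm)), (x, y)).

Lemma reorder_bij (K R AM BM X Y : finType) : bijective (@reorder K R AM BM X Y).
Proof.
exists (fun z => let: (((k, r), (am, bm)), (x, y)) := z in (k, (r, ((am, x), (y, bm))))).
  by case=> k [r [[am x] [y bm]]].
by case=> [[[k r] [am bm]] [x y]].
Qed.

Section Purification.
Variables (R hA' hB' AM BM : finType).
Local Notation Y0 := (R * ((hA' * AM) * (hB' * BM)))%type.
Local Notation K := ('I_#|{: Y0}|)%type.
Local Notation Z := (((K * R) * (AM * BM)) * (hA' * hB'))%type.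

Definition purif_label (w : K * Y0) : Z :=
  let: (k, (r, ((a, am), (b, bm)))) := w in (((k, r), (am, bm)), (a, b)).

Lemma purif_label_bij : bijective purif_label.
Proof.
exists (fun z => let: (((k, r), (am, bm)), (a, b)) := z in (k, (r, ((a, am), (b, bm))))).
  by case=> k [r [[a am] [b bm]]].
by case=> [[[k r] [am bm]] [a b]].
Qed.

(* The vector on Z whose reduction to Y0 is G G^H: its k-th branch is the
   k-th column of G, with the systems reordered. *)
Definition purify (G : Op C Y0) : 'cV[C]_#|{: Z}| :=
  \col_x (let: (((k, r), (am, bm)), (a, b)) := enum_val x in
          G (enum_rank (r, ((a, am), (b, bm)))) k).

Lemma opE_purify (G : Op C Y0) (k : K) (y : Y0) :
  purify G (enum_rank (purif_label (k, y))) 0 = G (enum_rank y) k.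
Proof. by case: y => r [[a am] [b bm]]; rewrite mxE enum_rankK. Qed.

Lemma opE_gram m (G : 'M[C]_(#|{: Y0}|, m)) y y' :
  opE (G *m adj G) y y' = \sum_k G (enum_rank y) k * (G (enum_rank y') k)^*.
Proof. by rewrite /opE mxE; apply: eq_bigr => k _; rewrite /adj !mxE. Qed.

Lemma purify_unit (G : Op C Y0) :
  \tr (G *m adj G) = 1 -> adj (purify G) *m purify G = 1%:M.
Proof.
move=> trG; apply/matrixP => i j; rewrite !ord1 mxE [RHS]mxE /= mulr1n -trG trE.
rewrite [LHS](_ : _ = \sum_z (purify G (enum_rank z) 0)^* * purify G (enum_rank z) 0).
  rewrite (sum_bij purif_label_bij) sum_pair exchange_big.
  apply: eq_bigr => y _; rewrite opE_gram; apply: eq_bigr => k _.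
  by rewrite opE_purify mulrC.
by rewrite -[RHS]sum_enum_val; apply: eq_bigr => x _; rewrite enum_valK /adj !mxE.
Qed.

(* Tracing K out of (id (x) N)(|w_G><w_G|) reproduces (id (x) (N (x) id))
   on G G^H: the superchannel's memory is absorbed into the reference. *)
Lemma purify_applyM (hA hB : finType) (N : Op C (hA' * hB') -> Op C (hA * hB))
    (G : Op C Y0) : linear N ->
  idtensor (applyM N) (G *m adj G) =
  ptrace (relabel (@reorder K R AM BM hA hB)
            (idtensor N (purify G *m adj (purify G)))).
Proof.
move=> lin_N; apply: op_ext => -[r [[am a] [b bm]]] [r' [[am' a'] [b' bm']]].
rewrite opE_idt /applyM !opE_mkop /=.
under eq_bigr do rewrite opE_mkop opE_idt /=.
rewrite -opE_sum -lin_sum //; congr (opE (N _) _ _); apply: op_ext => x y.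
rewrite opE_sum opE_mkop opE_blk opE_gram; apply: eq_bigr => k _.
rewrite opE_blk /opE mxE big_ord1 /adj !mxE.
by rewrite !enum_rankK; case: x y => [x1 x2] [y1 y2].
Qed.

Lemma purification (rho : Op C Y0) : psd rho -> \tr rho = 1 ->
  exists w : 'cV[C]_#|{: Z}|, adj w *m w = 1%:M /\
    forall (hA hB : finType) (N : Op C (hA' * hB') -> Op C (hA * hB)), linear N ->
    idtensor (applyM N) rho =
    ptrace (relabel (@reorder K R AM BM hA hB) (idtensor N (w *m adj w))).
Proof.
move=> /psd_factor [G ->] trG; exists (purify G); split; first exact: purify_unit.
by move=> hA hB N; apply: purify_applyM.
Qed.
End Purification.

(* Only linearity and complete positivity of M,
   complete positivity of the partial transposes of Ppre and Ppost, trace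
   preservation of Ppre and Ppost, and linearity of Ppost are needed. *)
Lemma superchannel_tnorm_le (A' B' hA' hB' AM BM hA hB A B R : finType)
    (M : Op C (hA' * hB') -> Op C (hA * hB))
    (Ppre : Op C (A' * B') -> Op C ((hA' * AM) * (hB' * BM)))
    (Ppost : Op C ((AM * hA) * (hB * BM)) -> Op C (A * B))
    (v : 'cV[C]_#|{: R * (A' * B')}|) :
  linear M -> CP M -> CP (ptconj Ppre) -> TP Ppre ->
  linear Ppost -> CP (ptconj Ppost) -> TP Ppost -> adj v *m v = 1%:M ->
  exists (R' : finType) (w : 'cV[C]_#|{: R' * (hA' * hB')}|),
    adj w *m w = 1%:M /\
    tnorm (idtensor (ptconj (superchannel Ppre Ppost M)) (v *m adj v)) <=
    tnorm (idtensor (ptconj M) (w *m adj w)).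
Proof.
move=> lin_M cp_M cp_pre tp_pre lin_post cp_post tp_post v_unit.
pose rho := idtensor (ptconj Ppre) (v *m adj v).
have rho_psd : psd rho by apply/cp_pre/psd_vv.
have rho_tr : \tr rho = 1.
  rewrite tr_idt; last exact: ptconj_TP.
  by rewrite mxtrace_mulC v_unit mxtrace1.
have [w [w_unit purif]] := purification rho_psd rho_tr.
exists _, w; split => //.
have -> : idtensor (ptconj (superchannel Ppre Ppost M)) (v *m adj v) =
    idtensor (ptconj Ppost) (idtensor (applyM (ptconj M)) rho).
  by rewrite -!idtensor_comp; apply: idtensor_ext => X; apply: superchannel_ptconj.
rewrite purif; last exact: ptconj_lin.
have reord_bij := @reorder_bij 'I_#|{: R * ((hA' * AM) * (hB' * BM))}| R AM BM hA hB.
apply: (tnorm_contract (f := fun X => idtensor (ptconj Ppost) (ptrace (relabel _ X)))).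
- move=> X Y; rewrite relabelB // ptraceB idtB //; exact: ptconj_lin.
- by move=> X pX; apply/cp_post/ptrace_psd/relabel_psd.
- move=> X; rewrite tr_idt; last exact: ptconj_TP.
  by rewrite ptrace_tr relabel_tr.
- exact: ptconj_pure_herm.
Qed.
End QuantumOps.

Theorem mainTheorem4 (C : numClosedFieldType)
    (A' B' hA' hB' AM BM hA hB A B : finType)
    (M : Op C (hA' * hB') -> Op C (hA * hB))
    (Ppre : Op C (A' * B') -> Op C ((hA' * AM) * (hB' * BM)))
    (Ppost : Op C ((AM * hA) * (hB * BM)) -> Op C (A * B)) :
  channel M -> PPTchannel Ppre -> PPTchannel Ppost ->
  EN_le (superchannel Ppre Ppost M) M.
Proof.
move=> [lin_M [cp_M _]] [[_ [_ tp_pre]] cp_pre] [[lin_post [_ tp_post]] cp_post].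
move=> b diamond_M R v v_unit.
have [R' [w [w_unit le_vw]]] := superchannel_tnorm_le lin_M cp_M cp_pre tp_pre
  lin_post cp_post tp_post v_unit.
exact: le_trans le_vw (diamond_M R' w w_unit).
Qed.
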